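(* Let $\mathcal{H}_A,\mathcal{H}_B,\mathcal{H}_C$ be finite-dimensional Hilbert spaces, let $\rho_{ABC}$ be a pure state, and let $Z=\{Z_j\}$ be an orthonormal basis of $\mathcal{H}_A$ (written as rank-one projectors $Z_j$), and let $\mathcal{B}_Z$ be an equivalence class of orthonormal bases of $\mathcal{H}_A$ mutually unbiased w.r.t. $Z$. The following are equivalent: (i) $\rho_{AB}=\sum_j Z_j\rho_{AB}Z_j$; (ii) the $Z$ information about $A$ is perfectly present in $C$; (iii) the state $\tilde\rho_{M_ZAB}=V_Z\rho_{AB}V_Z^\dagger$ is separable across the cut $M_Z|AB$ (a $Z$-measurement produces no entanglement between the measuring register and $AB$); (iv) for every basis $W\in\mathcal{B}_Z$, the $W$ information about $A$ is completely absent from $B$. Moreover, the equivalence of (i), (ii) and (iii) holds for any type of information $Z$ about $A$ (not necessarily rank-one projectors).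
   Context: A type of information $Z=\{Z_j\}_{j=1}^N$ about $A$ is a set of mutually orthogonal projectors on $\mathcal{H}_A$ summing to $I_A$; it is an orthonormal basis when all $Z_j$ are rank one. $\rho_{AB}=\mathrm{Tr}_C\rho_{ABC}$ and $Z_j$ acts as $Z_j\otimes I_B$. Let $M_Z$ be a register with orthonormal basis $\{|j\rangle\}$, $V_Z=\sum_j|j\rangle_{M_Z}\otimes Z_j$. For a type of information $X=\{X_j\}_{j=1}^N$ and a system $Y\in\{B,C\}$ define $p_j=\mathrm{Tr}(X_j\rho_A)$ and $p_j\rho_{Y,j}=\mathrm{Tr}_A[(X_j\otimes I_Y)\rho_{AY}]$. The $X$ information is perfectly present in $Y$ if the operators $\rho_{Y,j}$ (for $p_j>0$) have mutually orthogonal supports; it is completely absent from $Y$ if $p_j=1/N$ for all $j$ and all $\rho_{Y,j}$ are equal (hence equal to $\rho_Y$). A basis $W$ is mutually unbiased w.r.t. the basis $Z=\{|Z_j\rangle\}$ if $|\langle Z_j|W_k\rangle|^2=1/\dim\mathcal{H}_A$ for all $j,k$; two such bases are in the same equivalence class if related by a unitary diagonal in the $Z$ basis (possibly with a relabeling). *)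

(* complex scalars are an arbitrary numClosedFieldType C
   (e.g. algC, or R[i] for a real closed / real field R). *)
From HB Require Import structures.
From mathcomp Require Import all_boot all_order all_algebra.
From mathcomp Require Import fingroup perm sesquilinear spectral.
From mathcomp Require Import mxtens.

Set Implicit Arguments.
Unset Strict Implicit.
Unset Printing Implicit Defensive.

Import Order.TTheory GRing.Theory Num.Theory.
Local Open Scope ring_scope.
Local Open Scope sesquilinear_scope.

Section Quantum.
Variable C : numClosedFieldType.

(* conjugate transpose: M ^t* = (map_mx conjC M)^T  (spectral.v) *)

Definition hermitian {n} (A : 'M[C]_n) : Prop := A ^t* = A.

Definition psd {n} (A : 'M[C]_n) : Prop :=
  hermitian A /\ forall v : 'cV[C]_n, 0 <= (v ^t* *m A *m v) 0 0.

Definition density {n} (A : 'M[C]_n) : Prop := psd A /\ \tr A = 1.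

Definition pure_state {n} (rho : 'M[C]_n) : Prop :=
  exists psi : 'cV[C]_n, psi ^t* *m psi = 1%:M /\ rho = psi *m psi ^t*.

Definition type_of_info {d N} (Z : 'I_N -> 'M[C]_d) : Prop :=
  [/\ forall j, Z j ^t* = Z j,
      forall i j, Z i *m Z j = if i == j then Z i else 0
    & \sum_(j < N) Z j = 1%:M].

Definition onb {d} (e : 'I_d -> 'cV[C]_d) : Prop :=
  forall i j, e i ^t* *m e j = (i == j)%:R%:M.

Definition vproj {d} (v : 'cV[C]_d) : 'M[C]_d := v *m v ^t*.

Definition basis_proj {d} (e : 'I_d -> 'cV[C]_d) : 'I_d -> 'M[C]_d :=
  fun j => vproj (e j).

Definition mub {d} (z w : 'I_d -> 'cV[C]_d) : Prop :=
  forall j k, `|(z j ^t* *m w k) 0 0| ^+ 2 = d%:R^-1.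

(* w' is in the same equivalence class as w (w.r.t. the basis z):
   w'_k = (phase) * U w_(sigma k), with U unitary and diagonal in the
   z basis and sigma a relabeling. *)
Definition equiv_basis {d} (z w w' : 'I_d -> 'cV[C]_d) : Prop :=
  exists (U : 'M[C]_d) (s : {perm 'I_d}) (lam : 'I_d -> C),
    [/\ U \is unitarymx,
        forall j, exists c : C, U *m z j = c *: z j,
        forall k, `|lam k| = 1
      & forall k, w' k = lam k *: (U *m w (s k))].

Definition ptr2 {m n} (M : 'M[C]_(m * n)) : 'M[C]_m :=
  \matrix_(i, j) \sum_(k < n) M (mxtens_index (i, k)) (mxtens_index (j, k)).
Definition ptr1 {m n} (M : 'M[C]_(m * n)) : 'M[C]_n :=
  \matrix_(i, j) \sum_(k < m) M (mxtens_index (k, i)) (mxtens_index (k, j)).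

(* H_ABC is (H_A (x) H_B) (x) H_C *)
Definition idx3 {a b c} (i : 'I_a) (j : 'I_b) (k : 'I_c) : 'I_(a * b * c) :=
  mxtens_index (mxtens_index (i, j), k).

Definition rhoAB {a b c} (rho : 'M[C]_(a * b * c)) : 'M[C]_(a * b) := ptr2 rho.

Definition rhoAC {a b c} (rho : 'M[C]_(a * b * c)) : 'M[C]_(a * c) :=
  \matrix_(i, j) \sum_(k < b)
     rho (idx3 (mxtens_unindex i).1 k (mxtens_unindex i).2)
         (idx3 (mxtens_unindex j).1 k (mxtens_unindex j).2).

Definition prob {dA dY N} (X : 'I_N -> 'M[C]_dA) (rAY : 'M[C]_(dA * dY))
  (j : 'I_N) : C := \tr (X j *m ptr2 rAY).

Definition cond_state {dA dY N} (X : 'I_N -> 'M[C]_dA) (rAY : 'M[C]_(dA * dY))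
  (j : 'I_N) : 'M[C]_dY :=
  (prob X rAY j)^-1 *: ptr1 (tensmx (X j) (1%:M : 'M[C]_dY) *m rAY).

Definition orth_supp {n} (A B : 'M[C]_n) : Prop := A ^t* *m B = 0.

Definition perfectly_present {dA dY N} (X : 'I_N -> 'M[C]_dA)
  (rAY : 'M[C]_(dA * dY)) : Prop :=
  forall i j, i != j -> 0 < prob X rAY i -> 0 < prob X rAY j ->
    orth_supp (cond_state X rAY i) (cond_state X rAY j).

Definition completely_absent {dA dY N} (X : 'I_N -> 'M[C]_dA)
  (rAY : 'M[C]_(dA * dY)) : Prop :=
  (forall j, prob X rAY j = N%:R^-1) /\
  (forall i j, cond_state X rAY i = cond_state X rAY j).

(* V_Z = sum_j |j>_(M_Z) (x) Z_j (acting as Z_j (x) I_B) : H_AB -> H_M (x) H_AB *)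
Definition VZ {dA dB N} (Z : 'I_N -> 'M[C]_dA) : 'M[C]_(N * (dA * dB), dA * dB) :=
  \matrix_(i, k) tensmx (Z (mxtens_unindex i).1) (1%:M : 'M[C]_dB)
                         (mxtens_unindex i).2 k.

Definition separable {m n} (rho : 'M[C]_(m * n)) : Prop :=
  exists (K : nat) (p : 'I_K -> C) (s : 'I_K -> 'M[C]_m) (t : 'I_K -> 'M[C]_n),
    [/\ forall k, 0 <= p k, forall k, density (s k), forall k, density (t k)
      & rho = \sum_(k < K) p k *: tensmx (s k) (t k)].

Definition cond_i {dA dB N} (Z : 'I_N -> 'M[C]_dA) (rAB : 'M[C]_(dA * dB)) : Prop :=
  rAB = \sum_(j < N) tensmx (Z j) (1%:M : 'M[C]_dB) *m rAB
                      *m tensmx (Z j) (1%:M : 'M[C]_dB).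

Definition cond_iii {dA dB N} (Z : 'I_N -> 'M[C]_dA) (rAB : 'M[C]_(dA * dB)) : Prop :=
  separable (VZ Z *m rAB *m (VZ Z) ^t*).

End Quantum.

(* Write rho = |psi><psi| and reshape psi into a map M : H_C -> H_A (x) H_B,
   so that rho_AB = M M^* and, with P_j = Z_j (x) I_B and M_j = P_j M, the
   Z-conditional states of C are the transposes of M_j^* M_j.  Condition (i)
   says that the blocks P_i rho_AB P_j = M_i M_j^* vanish for i <> j.  This is
   equivalent to the orthogonality of the conditional states of C, and to the
   separability of V_Z rho_AB V_Z^*, whose (i, j) block is P_i rho_AB P_j:
   positivity forces every product term of a separable decomposition to live
   in a single diagonal block.
   For a basis Z, a basis W unbiased with respect to Z sees every block of a
   pinched state with weight 1/d, so the W information is absent from B.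
   Conversely, rephasing W by a unitary diagonal in Z keeps it in its class;
   if no rephased W carries information to B, the state of B conditioned on
   any outcome is a phase-independent sesquilinear form in the phases, whose
   off-diagonal coefficients are the blocks P_i rho_AB P_j, which therefore
   vanish. *)

From Pilot Require Import Defs.
From HB Require Import structures.
From mathcomp Require Import all_boot all_order all_algebra.
From mathcomp Require Import fingroup perm sesquilinear spectral.
From mathcomp Require Import mxtens.
From mathcomp Require Import ring.

Set Implicit Arguments.
Unset Strict Implicit.
Unset Printing Implicit Defensive.
Import Order.TTheory GRing.Theory Num.Theory.
Local Open Scope ring_scope.
Local Open Scope sesquilinear_scope.

Section Adjoint.
Variable C : numClosedFieldType.

Lemma trmxC_mul m n p (A : 'M[C]_(m, n)) (B : 'M[C]_(n, p)) :
  (A *m B) ^t* = B ^t* *m A ^t*.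
Proof. by rewrite trmx_mul map_mxM. Qed.

Lemma trmxCB m n (A B : 'M[C]_(m, n)) : (A - B) ^t* = A ^t* - B ^t*.
Proof. by rewrite linearB map_mxB. Qed.

Lemma trmxCZ m n a (A : 'M[C]_(m, n)) : (a *: A) ^t* = a^* *: A ^t*.
Proof. by rewrite linearZ map_mxZ. Qed.

Lemma trmxC0 m n : (0 : 'M[C]_(m, n)) ^t* = 0.
Proof. by rewrite trmx0 map_mx0. Qed.

Lemma trmxC1 n : (1%:M : 'M[C]_n) ^t* = 1%:M.
Proof. by rewrite trmx1 map_mx1. Qed.

Lemma trmxC_sum m n I (r : seq I) (P : pred I) (F : I -> 'M[C]_(m, n)) :
  (\sum_(i <- r | P i) F i) ^t* = \sum_(i <- r | P i) (F i) ^t*.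
Proof. by rewrite linear_sum map_mx_sum. Qed.

Lemma trmxC_tens m n p q (A : 'M[C]_(m, n)) (B : 'M[C]_(p, q)) :
  (A *t B) ^t* = A ^t* *t B ^t*.
Proof. by rewrite trmx_tens map_mxT. Qed.

Lemma trmxC_delta m n (i : 'I_m) (j : 'I_n) :
  (delta_mx i j : 'M[C]_(m, n)) ^t* = delta_mx j i.
Proof. by apply/matrixP=> x y; rewrite !mxE rmorph_nat andbC. Qed.

Lemma trmx_selfadj n (A : 'M[C]_n) : A ^t* = A -> A^T ^t* = A^T.
Proof. by move=> hA; rewrite -[in RHS]hA; apply/matrixP=> i j; rewrite !mxE. Qed.

End Adjoint.

Section Positivity.
Variable C : numClosedFieldType.

Lemma mxtrace_mul_trmxCE m n (A : 'M[C]_(m, n)) :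
  \tr (A *m A ^t*) = \sum_i \sum_j A i j * (A i j)^*.
Proof. by apply: eq_bigr=> i _; rewrite mxE; apply: eq_bigr=> j _; rewrite !mxE. Qed.

Lemma mxtrace_mul_trmxC_ge0 m n (A : 'M[C]_(m, n)) : 0 <= \tr (A *m A ^t*).
Proof.
by rewrite mxtrace_mul_trmxCE; do 2![apply: sumr_ge0=> ? _]; apply: mul_conjC_ge0.
Qed.

Lemma mxtrace_mul_trmxC_eq0 m n (A : 'M[C]_(m, n)) :
  \tr (A *m A ^t*) = 0 -> A = 0.
Proof.
rewrite mxtrace_mul_trmxCE => A0; apply/matrixP=> i j; rewrite mxE.
have ge0 k l : 0 <= A k l * (A k l)^* := mul_conjC_ge0 _.
have /(_ i isT) row0 := psumr_eq0P (fun k _ => sumr_ge0 _ (fun l _ => ge0 k l)) A0.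
have /(_ j isT)/eqP := psumr_eq0P (fun l _ => ge0 i l) row0.
by rewrite mul_conjC_eq0 => /eqP.
Qed.

Lemma mul_trmxC_eq0 m n (A : 'M[C]_(m, n)) : A *m A ^t* = 0 -> A = 0.
Proof. by move=> A0; apply: mxtrace_mul_trmxC_eq0; rewrite A0 mxtrace0. Qed.

Lemma trmxC_mul_eq0 m n (A : 'M[C]_(m, n)) : A ^t* *m A = 0 -> A = 0.
Proof.
move=> A0; have AC0 : A ^t* = 0 by apply: mul_trmxC_eq0; rewrite trmxCK.
by rewrite -[A]trmxCK AC0 trmxC0.
Qed.

Lemma mxtrace11 (A : 'M[C]_1) : \tr A = A 0 0.
Proof. exact: big_ord1. Qed.

Lemma quad_form_ge0 n (x : 'cV[C]_n) : 0 <= (x ^t* *m x) 0 0.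
Proof. by rewrite -mxtrace11 mxtrace_mulC mxtrace_mul_trmxC_ge0. Qed.

Lemma quad_form_eq0 n (x : 'cV[C]_n) : (x ^t* *m x) 0 0 = 0 -> x = 0.
Proof. by rewrite -mxtrace11 mxtrace_mulC => /mxtrace_mul_trmxC_eq0. Qed.

Lemma quad_form_delta n (M : 'M[C]_n) (i : 'I_n) :
  ((delta_mx i 0 : 'cV[C]_n) ^t* *m M *m (delta_mx i 0 : 'cV[C]_n)) 0 0 = M i i.
Proof. by rewrite trmxC_delta -(rowE i M) -(colE i (row i M)) !mxE. Qed.

Lemma mul_trmxC_psd m n (A : 'M[C]_(m, n)) : psd (A *m A ^t*).
Proof.
split=> [|v]; first by rewrite /Defs.hermitian trmxC_mul trmxCK.
have -> : v ^t* *m (A *m A ^t*) *m v = (A ^t* *m v) ^t* *m (A ^t* *m v).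
  by rewrite trmxC_mul trmxCK !mulmxA.
exact: quad_form_ge0.
Qed.

Lemma psd_scale n c (H : 'M[C]_n) : 0 <= c -> psd H -> psd (c *: H).
Proof.
move=> c0 [hH pH]; split; first by rewrite /Defs.hermitian trmxCZ geC0_conj // hH.
by move=> v; rewrite -scalemxAr -scalemxAl mxE mulr_ge0.
Qed.

Lemma density_delta n (j : 'I_n) : density (delta_mx j j : 'M[C]_n).
Proof.
have dj : delta_mx j j = delta_mx j 0 *m (delta_mx j 0 : 'cV[C]_n) ^t*.
  by rewrite trmxC_delta mul_delta_mx.
split; first by rewrite dj; apply: mul_trmxC_psd.
by rewrite dj mxtrace_mulC trmxC_delta mul_delta_mx mxtrace11 mxE !eqxx.
Qed.

(* Perturbing [v] in the direction [- a H v], with [a = |H v|^2], makes the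
   form negative unless [a = 0]. *)
Lemma psd_quad_eq0 n (H : 'M[C]_n) (v : 'cV[C]_n) :
  psd H -> (v ^t* *m H *m v) 0 0 = 0 -> H *m v = 0.
Proof.
move=> [hH pH] hv; set w := H *m v.
have vH : v ^t* *m H = w ^t* by rewrite /w trmxC_mul hH.
set a := (w ^t* *m w) 0 0; set c := (w ^t* *m H *m w) 0 0.
have a0 : 0 <= a := quad_form_ge0 w.
have c0 : 0 <= c := pH w.
have c1 : 0 <= c + 1 by rewrite addr_ge0.
have vHw : (v ^t* *m H *m w) 0 0 = a by rewrite vH.
have wHv : (w ^t* *m H *m v) 0 0 = a by rewrite -mulmxA.
have := pH ((c + 1) *: v - a *: w).
rewrite trmxCB !trmxCZ (geC0_conj c1) (geC0_conj a0) mulmxBl !mulmxBr.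
rewrite -!scalemxAl -!scalemxAr !mulmxBl -!scalemxAl.
rewrite -mxtrace11 !linearB !linearZ /= !mxtrace11 hv vHw wHv -/c.
have -> : (c + 1) * ((c + 1) * 0) - (c + 1) * (a * a) - (a * ((c + 1) * a) - a * (a * c))
   = - (a * a * (c + 2)) by ring.
have c2 : 0 < c + 2 by rewrite (lt_le_trans (ltr0n _ 2)) // lerDr.
rewrite oppr_ge0 pmulr_lle0 // => aa.
have /eqP : a * a = 0 by apply/eqP; rewrite eq_le aa mulr_ge0.
by rewrite mulf_eq0 orbb => /eqP /quad_form_eq0.
Qed.

Lemma sandwich_diag_quad n (H Q : 'M[C]_n) i : Q ^t* = Q ->
  (Q *m H *m Q) i i =
  ((Q *m (delta_mx i 0 : 'cV[C]_n)) ^t* *m H *m (Q *m (delta_mx i 0 : 'cV[C]_n))) 0 0.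
Proof. by move=> hQ; rewrite trmxC_mul hQ -quad_form_delta !mulmxA. Qed.

Lemma psd_trace_sandwich_ge0 n (H Q : 'M[C]_n) :
  psd H -> Q ^t* = Q -> 0 <= \tr (Q *m H *m Q).
Proof.
by move=> pH hQ; apply: sumr_ge0=> i _; rewrite sandwich_diag_quad //; apply: pH.2.
Qed.

Lemma psd_trace_sandwich_eq0 n (H Q : 'M[C]_n) :
  psd H -> Q ^t* = Q -> \tr (Q *m H *m Q) = 0 -> H *m Q = 0.
Proof.
move=> pH hQ; have ge0 i : 0 <= (Q *m H *m Q) i i by rewrite sandwich_diag_quad ?pH.2.
move=> /psumr_eq0P-/(_ (fun i _ => ge0 i)) diag0; apply/matrixP=> j i.
have := diag0 i isT; rewrite sandwich_diag_quad // => /(psd_quad_eq0 pH)/matrixP/(_ j 0).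
by rewrite mulmxA -colE !mxE.
Qed.

Lemma psd_diag_eq0 n (H : 'M[C]_n) i j : psd H -> H i i = 0 -> H i j = 0 /\ H j i = 0.
Proof.
move=> pH /(etrans (quad_form_delta H i))/(psd_quad_eq0 pH)/matrixP/(_ j 0).
rewrite -colE !mxE => Hji; split=> //.
by case: pH => hH _; rewrite -hH !mxE Hji rmorph0.
Qed.

Lemma mul_gram_eq0 r s n (X : 'M[C]_(r, n)) (Y : 'M[C]_(s, n)) :
  X ^t* *m X *m (Y ^t* *m Y) = 0 -> X *m Y ^t* = 0.
Proof.
move=> XY0; have XYY0 : X *m Y ^t* *m Y = 0.
  apply: trmxC_mul_eq0; rewrite !trmxC_mul trmxCK.
  have -> : Y ^t* *m (Y *m X ^t*) *m (X *m Y ^t* *m Y) =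
            Y ^t* *m Y *m (X ^t* *m X *m (Y ^t* *m Y)) by rewrite !mulmxA.
  by rewrite XY0 mulmx0.
by apply: mul_trmxC_eq0; rewrite trmxC_mul trmxCK !mulmxA XYY0 mul0mx.
Qed.

Lemma psd_comb_sandwich_eq0 n K (c : 'I_K -> C) (t : 'I_K -> 'M[C]_n) (Q : 'M[C]_n) :
  (forall k, 0 <= c k) -> (forall k, psd (t k)) -> Q ^t* = Q ->
  Q *m (\sum_k c k *: t k) *m Q = 0 -> forall k, c k * \tr (Q *m t k *m Q) = 0.
Proof.
move=> c0 t_psd hQ /(congr1 mxtrace); rewrite mxtrace0 mulmx_sumr mulmx_suml linear_sum /=.
under eq_bigr do rewrite -scalemxAr -scalemxAl mxtraceZ.
move=> /psumr_eq0P-/(_ (fun k _ => mulr_ge0 (c0 k) (psd_trace_sandwich_ge0 (t_psd k) hQ))).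
by move=> + k; apply.
Qed.

Lemma psd_compl_trace_eq0 n (t P : 'M[C]_n) : psd t -> P ^t* = P ->
  \tr ((1%:M - P) *m t *m (1%:M - P)) = 0 -> t *m P = t.
Proof.
move=> t_psd hP /(psd_trace_sandwich_eq0 t_psd); rewrite trmxCB trmxC1 hP => /(_ erefl).
by rewrite mulmxBr mulmx1 => /eqP; rewrite subr_eq0 => /eqP.
Qed.

End Positivity.

Section PartialTrace.
Variable C : numClosedFieldType.

Lemma big_mxtens_index (V : nmodType) m n (F : 'I_(m * n) -> V) :
  \sum_(i < m * n) F i = \sum_(a < m) \sum_(b < n) F (mxtens_index (a, b)).
Proof.
rewrite pair_big /= (reindex (@mxtens_index m n)) /=; first by apply: eq_bigr=> -[].
by exists (@mxtens_unindex m n)=> i _; rewrite (mxtens_indexK, mxtens_unindexK).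
Qed.

Lemma tensmx1E m n p (A : 'M[C]_(m, p)) a b a' b' :
  (A *t (1%:M : 'M[C]_n)) (mxtens_index (a, b)) (mxtens_index (a', b')) =
  A a a' * (b == b')%:R.
Proof. by rewrite tensmxE mxE. Qed.

Lemma sum_delta_r n (f : 'I_n -> C) b : \sum_(b' < n) f b' * (b' == b)%:R = f b.
Proof.
rewrite (bigD1 b) //= eqxx mulr1 big1 ?addr0 // => b' /negbTE->.
by rewrite mulr0.
Qed.

Lemma sum_delta_l n (f : 'I_n -> C) c b :
  \sum_(b' < n) c * (b == b')%:R * f b' = c * f b.
Proof.
rewrite (bigD1 b) //= eqxx mulr1 big1 ?addr0 // => b' nb.
by rewrite eq_sym (negbTE nb) mulr0 mul0r.
Qed.

Lemma tens_suml m n p q I (r : seq I) (P : pred I) (F : I -> 'M[C]_(m, n))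
    (B : 'M[C]_(p, q)) :
  (\sum_(i <- r | P i) F i) *t B = \sum_(i <- r | P i) (F i *t B).
Proof.
apply/matrixP=> x y; rewrite !mxE !summxE mulr_suml.
by apply: eq_bigr=> i _; rewrite !mxE.
Qed.

Lemma tensmxZl m n p q a (A : 'M[C]_(m, n)) (B : 'M[C]_(p, q)) :
  (a *: A) *t B = a *: (A *t B).
Proof. by apply/matrixP=> x y; rewrite !mxE mulrA. Qed.

Lemma tensmx11 m n : (1%:M : 'M[C]_m) *t (1%:M : 'M[C]_n) = 1%:M.
Proof.
apply/matrixP=> x y.
case: (mxtens_indexP x)=> a b; case: (mxtens_indexP y)=> a' b'.
rewrite tensmxE !mxE (inj_eq (can_inj (@mxtens_indexK m n))) xpair_eqE.
by case: (a == a'); case: (b == b'); rewrite /= ?mulr1 ?mulr0.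
Qed.

Lemma ptr1Z m n a (R : 'M[C]_(m * n)) : ptr1 (a *: R) = a *: ptr1 R.
Proof.
by apply/matrixP=> x y; rewrite !mxE mulr_sumr; apply: eq_bigr=> i _; rewrite !mxE.
Qed.

Lemma ptr1_sum m n I (r : seq I) (P : pred I) (F : I -> 'M[C]_(m * n)) :
  ptr1 (\sum_(i <- r | P i) F i) = \sum_(i <- r | P i) ptr1 (F i).
Proof.
apply/matrixP=> x y; rewrite !mxE summxE.
under eq_bigr do rewrite summxE.
by rewrite exchange_big /=; apply: eq_bigr=> i _; rewrite !mxE.
Qed.

Lemma mxtrace_ptr1 m n (R : 'M[C]_(m * n)) : \tr (ptr1 R) = \tr R.
Proof.
by rewrite /mxtrace big_mxtens_index exchange_big; apply: eq_bigr=> b _; rewrite mxE.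
Qed.

Lemma mxtrace_ptr2 m n (R : 'M[C]_(m * n)) : \tr (ptr2 R) = \tr R.
Proof. by rewrite /mxtrace big_mxtens_index; apply: eq_bigr=> b _; rewrite mxE. Qed.

Lemma mxtrace_mul_ptr2 m n (X : 'M[C]_m) (R : 'M[C]_(m * n)) :
  \tr (X *m ptr2 R) = \tr (ptr1 ((X *t (1%:M : 'M[C]_n)) *m R)).
Proof.
rewrite mxtrace_ptr1 /mxtrace big_mxtens_index.
apply: eq_bigr=> a _; rewrite mxE.
under eq_bigr=> x _ do rewrite mxE mulr_sumr.
under [RHS]eq_bigr=> b _ do [rewrite mxE big_mxtens_index;
    under eq_bigr=> x _ do [under eq_bigr=> y _ do rewrite tensmx1E; rewrite sum_delta_l]].
by rewrite exchange_big.
Qed.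

Lemma tens1_sandwichE m n (A B : 'M[C]_m) (R : 'M[C]_(m * n)) a b a' b' :
  ((A *t (1%:M : 'M[C]_n)) *m R *m (B *t (1%:M : 'M[C]_n)))
     (mxtens_index (a, b)) (mxtens_index (a', b')) =
  \sum_(x < m) \sum_(x' < m)
     A a x * R (mxtens_index (x, b)) (mxtens_index (x', b')) * B x' a'.
Proof.
rewrite mxE big_mxtens_index.
under eq_bigr=> x' _ do
  [under eq_bigr=> y _ do rewrite tensmx1E mulrA; rewrite sum_delta_r mxE big_mxtens_index;
   under eq_bigr=> x _ do [under eq_bigr=> y _ do rewrite tensmx1E; rewrite sum_delta_l]].
by rewrite exchange_big /=; apply: eq_bigr=> x _; rewrite mulr_suml.
Qed.

Lemma ptr1_tens1_cycle m n (A B : 'M[C]_m) (R : 'M[C]_(m * n)) :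
  ptr1 ((A *t (1%:M : 'M[C]_n)) *m R *m (B *t (1%:M : 'M[C]_n))) =
  ptr1 (((B *m A) *t (1%:M : 'M[C]_n)) *m R).
Proof.
apply/matrixP=> b b'; rewrite !mxE.
under eq_bigr do rewrite mxE big_mxtens_index.
under eq_bigr=> i _ do under eq_bigr=> a _ do
   [under eq_bigr=> y _ do rewrite tensmx1E mulrA; rewrite sum_delta_r mxE big_mxtens_index;
    under eq_bigr=> x _ do [under eq_bigr=> y _ do rewrite tensmx1E; rewrite sum_delta_l]].
under [RHS]eq_bigr=> k _ do [rewrite mxE big_mxtens_index;
    under eq_bigr=> x _ do [under eq_bigr=> y _ do rewrite tensmx1E;
      rewrite sum_delta_l mxE mulr_suml]].
rewrite exchange_big /=; apply: eq_bigr=> k _.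
under eq_bigr=> i _ do rewrite mulr_suml.
rewrite exchange_big /=; apply: eq_bigr=> x _.
by apply: eq_bigr=> i _; rewrite mulrC mulrA mulrAC; congr (_ * _); exact: mulrC.
Qed.

Lemma vproj_tens1_sandwich m n (u v : 'cV[C]_m) (R : 'M[C]_(m * n)) :
  ((u *m u ^t*) *t (1%:M : 'M[C]_n)) *m R *m ((v *m v ^t*) *t (1%:M : 'M[C]_n)) =
  (u *m v ^t*) *t ptr1 (((v *m u ^t*) *t (1%:M : 'M[C]_n)) *m R).
Proof.
apply/matrixP=> i j.
case: (mxtens_indexP i)=> a b; case: (mxtens_indexP j)=> a' b'.
rewrite tens1_sandwichE tensmxE [ptr1 _ _ _]mxE.
under [in RHS]eq_bigr=> y _ do [rewrite mxE big_mxtens_index;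
    under eq_bigr=> x _ do [under eq_bigr=> z _ do rewrite tensmx1E; rewrite sum_delta_l]].
rewrite exchange_big mulr_sumr; apply: eq_bigr=> x _.
rewrite mulr_sumr; apply: eq_bigr=> x' _.
by rewrite !mxE !big_ord1 !mxE; ring.
Qed.

End PartialTrace.

Section Pinching.
Variable C : numClosedFieldType.

Definition blockdiag n N (P : 'I_N -> 'M[C]_n) (R : 'M[C]_n) :=
  forall i j, i != j -> P i *m R *m P j = 0.

Lemma pinch_fixed_blockdiag n N (P : 'I_N -> 'M[C]_n) (R : 'M[C]_n) :
  type_of_info P -> R = \sum_(j < N) P j *m R *m P j <-> blockdiag P R.
Proof.
move=> [_ PP sP]; split=> [-> i j ij | bd].
  rewrite mulmx_sumr mulmx_suml big1 // => k _.
  rewrite !mulmxA PP -!mulmxA PP; case: (eqVneq i k)=> [<-|_].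
    by rewrite (negbTE ij) !mulmx0.
  by rewrite mul0mx.
rewrite -[LHS]mul1mx -[LHS]mulmx1 -sP mulmx_suml mulmx_suml.
apply: eq_bigr=> i _; rewrite mulmx_sumr (bigD1 i) //= big1 ?addr0 // => j ji.
by apply: bd; rewrite eq_sym.
Qed.

Lemma type_of_info_tens1 dA dB N (Z : 'I_N -> 'M[C]_dA) : type_of_info Z ->
  type_of_info (fun j => Z j *t (1%:M : 'M[C]_dB)).
Proof.
move=> [hZ ZZ sZ]; split=> [j | i j |].
- by rewrite trmxC_tens hZ trmxC1.
- by rewrite tensmx_mul ZZ mulmx1; case: (i == j); rewrite ?tens0mx.
- by rewrite -tens_suml sZ tensmx11.
Qed.

End Pinching.

Section PureState.
Variable C : numClosedFieldType.

(* The pure state [psi] on [AB (x) C] viewed as a linear map [C -> AB]. *)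
Definition amp_mx a b c (psi : 'cV[C]_(a * b * c)) : 'M[C]_(a * b, c) :=
  \matrix_(x, k) psi (mxtens_index (x, k)) 0.

Lemma rhoAB_pure a b c (psi : 'cV[C]_(a * b * c)) :
  rhoAB (psi *m psi ^t*) = amp_mx psi *m (amp_mx psi) ^t*.
Proof.
apply/matrixP=> x y; rewrite !mxE; apply: eq_bigr=> k _.
by rewrite !mxE big_ord1 !mxE.
Qed.

Lemma ptr1_rhoAC_pure a b c (psi : 'cV[C]_(a * b * c)) (Z : 'M[C]_a) :
  ptr1 ((Z *t (1%:M : 'M[C]_c)) *m rhoAC (psi *m psi ^t*)) =
  ((amp_mx psi) ^t* *m (Z *t (1%:M : 'M[C]_b)) *m amp_mx psi)^T.
Proof.
apply/matrixP=> k k'; rewrite !mxE.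
under eq_bigr=> x _ do [rewrite mxE big_mxtens_index;
   under eq_bigr=> y _ do [under eq_bigr=> z _ do rewrite tensmx1E; rewrite sum_delta_l]].
rewrite big_mxtens_index.
under eq_bigr=> x _ do [under eq_bigr=> y _ do rewrite mxE !mxtens_indexK /= mulr_sumr].
under [RHS]eq_bigr=> a0 _ do [under eq_bigr=> b0 _ do
   [rewrite mxE big_mxtens_index mulr_suml;
    under eq_bigr=> x _ do [under eq_bigr=> y _ do rewrite tensmx1E mulrA;
      rewrite sum_delta_r]]; rewrite exchange_big /=].
rewrite [RHS]exchange_big /=; apply: eq_bigr=> x _.
apply: eq_bigr=> y _; apply: eq_bigr=> z _.
by rewrite !mxE big_ord1 !mxE; ring.
Qed.

Lemma pure_dim_gt0 n (psi : 'cV[C]_n) : psi ^t* *m psi = 1%:M -> (0 < n)%N.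
Proof.
case: n psi => // psi /(congr1 (fun M : 'M[C]_1 => M 0 0)).
by rewrite !mxE big_ord0 => /eqP; rewrite eq_sym mulr1n oner_eq0.
Qed.

Lemma pure_mxtrace n (psi : 'cV[C]_n) : psi ^t* *m psi = 1%:M -> \tr (psi *m psi ^t*) = 1.
Proof. by move=> h; rewrite mxtrace_mulC h mxtrace1. Qed.

Lemma VZ_conjE dA dB N (Z : 'I_N -> 'M[C]_dA) (R : 'M[C]_(dA * dB)) j x j' y :
  (VZ Z *m R *m (VZ Z) ^t*) (mxtens_index (j, x)) (mxtens_index (j', y)) =
  ((Z j *t (1%:M : 'M[C]_dB)) *m R *m (Z j' *t (1%:M : 'M[C]_dB)) ^t*) x y.
Proof.
rewrite !mxE; apply: eq_bigr=> l _; rewrite !mxE !mxtens_indexK; congr (_ * _).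
by apply: eq_bigr=> k _; rewrite !mxE !mxtens_indexK.
Qed.

Lemma sum_tensE m n K (p : 'I_K -> C) (s : 'I_K -> 'M[C]_m) (t : 'I_K -> 'M[C]_n)
    j x j' y :
  (\sum_(k < K) p k *: (s k *t t k)) (mxtens_index (j, x)) (mxtens_index (j', y)) =
  \sum_(k < K) p k * (s k j j' * t k x y).
Proof. by rewrite summxE; apply: eq_bigr=> k _; rewrite mxE tensmxE. Qed.

End PureState.

Section GeneralInformation.
Variable C : numClosedFieldType.
Variables (dA dB dC : nat) (psi : 'cV[C]_(dA * dB * dC)).
Hypothesis psi_unit : psi ^t* *m psi = 1%:M.
Variables (N : nat) (Z : 'I_N -> 'M[C]_dA).
Hypothesis Z_info : type_of_info Z.

Let rho := psi *m psi ^t*.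
Let M := amp_mx psi.
Let P j := Z j *t (1%:M : 'M[C]_dB).
Let Mj j := P j *m M.

Let P_info : type_of_info P. Proof. exact: type_of_info_tens1. Qed.
Let P_herm j : P j ^t* = P j. Proof. by case: P_info. Qed.

Lemma pinch_block_pure i j : P i *m rhoAB rho *m P j = Mj i *m (Mj j) ^t*.
Proof. by rewrite rhoAB_pure trmxC_mul P_herm !mulmxA. Qed.

Lemma gram_block_pure j : M ^t* *m P j *m M = (Mj j) ^t* *m Mj j.
Proof.
by case: P_info => _ PP _; rewrite trmxC_mul P_herm !mulmxA -(mulmxA _ (P j) (P j)) PP eqxx.
Qed.

Lemma prob_pure j : prob Z (rhoAC rho) j = \tr (Mj j *m (Mj j) ^t*).
Proof.
by rewrite /prob mxtrace_mul_ptr2 ptr1_rhoAC_pure mxtrace_tr gram_block_pure mxtrace_mulC.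
Qed.

Lemma cond_state_pure j :
  cond_state Z (rhoAC rho) j = (prob Z (rhoAC rho) j)^-1 *: ((Mj j) ^t* *m Mj j)^T.
Proof. by rewrite /cond_state ptr1_rhoAC_pure gram_block_pure. Qed.

Lemma cond_state_orthE i j :
  (cond_state Z (rhoAC rho) i) ^t* *m cond_state Z (rhoAC rho) j =
  (((prob Z (rhoAC rho) i)^-1)^* * (prob Z (rhoAC rho) j)^-1) *:
    ((Mj j) ^t* *m (Mj j *m (Mj i) ^t*) *m Mj i)^T.
Proof.
rewrite !cond_state_pure trmxCZ -scalemxAl -scalemxAr scalerA.
rewrite trmx_selfadj ?trmxC_mul ?trmxCK // -trmx_mul; congr (_ *: _^T).
by rewrite !mulmxA.
Qed.

Lemma prob_pure_eq0 j : prob Z (rhoAC rho) j = 0 -> Mj j = 0.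
Proof. by rewrite prob_pure => /mxtrace_mul_trmxC_eq0. Qed.

Lemma blockdiag_perfectly_present :
  blockdiag P (rhoAB rho) -> perfectly_present Z (rhoAC rho).
Proof.
move=> bd i j ij _ _; rewrite /orth_supp cond_state_orthE.
by rewrite -pinch_block_pure bd 1?eq_sym // mulmx0 mul0mx trmx0 scaler0.
Qed.

Lemma perfectly_present_blockdiag :
  perfectly_present Z (rhoAC rho) -> blockdiag P (rhoAB rho).
Proof.
move=> pp i j ij; rewrite pinch_block_pure.
have [/prob_pure_eq0->|pi0] := eqVneq (prob Z (rhoAC rho) i) 0; first by rewrite mul0mx.
have [/prob_pure_eq0->|pj0] := eqVneq (prob Z (rhoAC rho) j) 0.
  by rewrite trmxC0 mulmx0.
have prob_gt0 k : prob Z (rhoAC rho) k != 0 -> 0 < prob Z (rhoAC rho) k.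
  by rewrite lt_def prob_pure mxtrace_mul_trmxC_ge0 andbT.
have /eqP := pp i j ij (prob_gt0 _ pi0) (prob_gt0 _ pj0).
rewrite /orth_supp cond_state_orthE scaler_eq0 mulf_eq0 conjC_eq0 !invr_eq0.
rewrite (negbTE pi0) (negbTE pj0) /= trmx_eq0.
have -> : (Mj j) ^t* *m (Mj j *m (Mj i) ^t*) *m Mj i =
          (Mj j) ^t* *m Mj j *m ((Mj i) ^t* *m Mj i) by rewrite !mulmxA.
by move=> /eqP/mul_gram_eq0/(congr1 (fun X => X ^t*)); rewrite trmxC_mul trmxCK trmxC0.
Qed.

(* The separable decomposition: the outcome [j] recorded as [|j><j|] on
   [M_Z], tensored with the normalised block [P_j rho_AB P_j] (any state
   will do when this block vanishes). *)
Lemma blockdiag_separable : blockdiag P (rhoAB rho) -> cond_iii Z (rhoAB rho).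
Proof.
move=> bd.
have dAB_gt0 : (0 < dA * dB)%N.
  by have := pure_dim_gt0 psi_unit; rewrite muln_gt0 => /andP[].
pose x0 := Ordinal dAB_gt0.
pose p j := \tr (Mj j *m (Mj j) ^t*).
exists N, p, (fun j => delta_mx j j),
  (fun j => if p j == 0 then delta_mx x0 x0 else (p j)^-1 *: (Mj j *m (Mj j) ^t*)).
split=> [k | k | k |]; first exact: mxtrace_mul_trmxC_ge0.
- exact: density_delta.
- case: ifPn=> pk; first exact: density_delta.
  split; last by rewrite mxtraceZ mulVf.
  by apply: psd_scale; [rewrite invr_ge0 mxtrace_mul_trmxC_ge0 | apply: mul_trmxC_psd].
apply/matrixP=> I J; case: (mxtens_indexP I)=> j x; case: (mxtens_indexP J)=> j' y.
rewrite VZ_conjE sum_tensE P_herm pinch_block_pure (bigD1 j) //= big1 ?addr0; last first.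
  by move=> k kj; rewrite mxE eq_sym (negbTE kj) mul0r mulr0.
rewrite [delta_mx _ _ _ _]mxE eqxx /=; have [<-{j'}|jj'] := eqVneq j j'; last first.
  by rewrite -pinch_block_pure bd // mxE mul0r mulr0.
rewrite mul1r.
case: ifPn=> [/eqP p0 | pj]; last by rewrite [X in _ = _ * X]mxE mulrA mulfV ?mul1r.
by rewrite p0 mul0r (mxtrace_mul_trmxC_eq0 p0) mul0mx mxE.
Qed.

(* Positivity confines each product term [s_k (x) t_k] of a separable
   decomposition to the diagonal [Z]-blocks: an off-diagonal entry of [s_k]
   would force [t_k] to be supported in two orthogonal ranges [P_i], [P_j]. *)
Lemma separable_blockdiag : cond_iii Z (rhoAB rho) -> blockdiag P (rhoAB rho).
Proof.
case=> K [p [s [t [p_ge0 s_dens t_dens VRV]]]].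
have block j j' : P j *m rhoAB rho *m P j' = \sum_(k < K) (p k * s k j j') *: t k.
  apply/matrixP=> x y; rewrite -[P j' in LHS]P_herm -VZ_conjE VRV sum_tensE summxE.
  by apply: eq_bigr=> k _; rewrite mxE mulrA.
have s_diag_ge0 k j : 0 <= s k j j.
  by rewrite -quad_form_delta; case: (s_dens k) => -[_ ->].
case: P_info => _ PP _.
have compl0 j k : p k * s k j j * \tr ((1%:M - P j) *m t k *m (1%:M - P j)) = 0.
  apply: (psd_comb_sandwich_eq0 (c := fun k => p k * s k j j)).
  - by move=> k'; rewrite mulr_ge0.
  - by move=> k'; case: (t_dens k').
  - by rewrite trmxCB trmxC1 P_herm.
  by rewrite -block mulmxBl mul1mx !mulmxA PP eqxx subrr !mul0mx.
move=> i j ij; rewrite block big1 // => k _.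
suff -> : p k * s k i j = 0 by rewrite scale0r.
have [->|pk] := eqVneq (p k) 0; first by rewrite mul0r.
have [/(psd_diag_eq0 j (s_dens k).1)[-> _]|sii] := eqVneq (s k i i) 0.
  by rewrite mulr0.
have [/(psd_diag_eq0 i (s_dens k).1)[_ ->]|sjj] := eqVneq (s k j j) 0.
  by rewrite mulr0.
have tP l : p k * s k l l != 0 -> t k *m P l = t k.
  move=> nz; apply: psd_compl_trace_eq0; [exact: (t_dens k).1 | exact: P_herm |].
  by have /eqP := compl0 l k; rewrite mulf_eq0 (negbTE nz) => /eqP.
have t0 : t k = 0.
  by rewrite -(tP j) ?mulf_neq0 // -(tP i) ?mulf_neq0 // -mulmxA PP (negbTE ij) mulmx0.
by have := (t_dens k).2; rewrite t0 mxtrace0 => /eqP; rewrite eq_sym oner_eq0.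
Qed.

End GeneralInformation.

Section Bases.
Variable C : numClosedFieldType.

Lemma onb_sum_vproj d (e : 'I_d -> 'cV[C]_d) : onb e -> \sum_(j < d) vproj (e j) = 1%:M.
Proof.
move=> he; pose E : 'M[C]_d := \matrix_(i, j) e j i 0.
have EE : E ^t* *m E = 1%:M.
  apply/matrixP=> i j; transitivity ((e i ^t* *m e j) 0 0).
    by rewrite !mxE; apply: eq_bigr=> k _; rewrite !mxE.
  by rewrite he !mxE eqxx mulr1n.
apply/matrixP=> x y; rewrite -(mulmx1C EE) summxE !mxE; apply: eq_bigr=> j _.
by rewrite !mxE big_ord1 !mxE.
Qed.

Lemma vproj_onb d (z : 'I_d -> 'cV[C]_d) m j : onb z ->
  vproj (z m) *m z j = if m == j then z j else 0.
Proof.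
move=> hz; rewrite /vproj -mulmxA hz.
by case: eqVneq=> [->|_]; rewrite ?mulmx1 // -scalemx1 scale0r mulmx0.
Qed.

Lemma onb_type_of_info d (z : 'I_d -> 'cV[C]_d) : onb z -> type_of_info (basis_proj z).
Proof.
move=> hz; split=> [j | i j |]; first by rewrite /basis_proj /vproj trmxC_mul trmxCK.
- rewrite /basis_proj [vproj (z j)]/vproj mulmxA vproj_onb //.
  by case: eqVneq=> [->|_]; rewrite ?mul0mx.
- exact: onb_sum_vproj.
Qed.

Lemma vproj_sandwich d (z w : 'cV[C]_d) :
  vproj z *m vproj w *m vproj z = `|(z ^t* *m w) 0 0| ^+ 2 *: vproj z.
Proof.
have -> : vproj z *m vproj w *m vproj z = z *m (z ^t* *m w) *m (w ^t* *m z) *m z ^t*.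
  by rewrite /vproj !mulmxA.
have wz : w ^t* *m z = ((z ^t* *m w) 0 0)^*%:M.
  rewrite [LHS]mx11_scalar; congr (_%:M); rewrite !mxE rmorph_sum.
  by apply: eq_bigr=> k _; rewrite !mxE rmorphM /= conjCK mulrC.
have zw : z ^t* *m w = ((z ^t* *m w) 0 0)%:M by apply: mx11_scalar.
move: zw wz; set a := (z ^t* *m w) 0 0 => -> ->.
by rewrite !mul_mx_scalar -!scalemxAl scalerA -normCKC.
Qed.

(* Each block of a [z]-pinched state contributes [|<z_j, w>|^2 = 1/d] of its
   reduced state. *)
Lemma ptr1_vproj_unbiased d n (z : 'I_d -> 'cV[C]_d) (w : 'cV[C]_d) (R : 'M[C]_(d * n)) :
  onb z -> (forall j, `|(z j ^t* *m w) 0 0| ^+ 2 = d%:R^-1) ->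
  cond_i (basis_proj z) R ->
  ptr1 ((vproj w *t (1%:M : 'M[C]_n)) *m R) = d%:R^-1 *: ptr1 R.
Proof.
move=> hz hw hR; rewrite {1}hR mulmx_sumr ptr1_sum.
under eq_bigr=> j _ do rewrite !mulmxA tensmx_mul mulmx1 ptr1_tens1_cycle mulmxA
  vproj_sandwich hw tensmxZl -scalemxAl ptr1Z.
rewrite -scaler_sumr -ptr1_sum -mulmx_suml -tens_suml.
by rewrite onb_sum_vproj // tensmx11 mul1mx.
Qed.

Lemma mub_completely_absent d n (z w : 'I_d -> 'cV[C]_d) (R : 'M[C]_(d * n)) :
  onb z -> mub z w -> cond_i (basis_proj z) R -> \tr R = 1 ->
  completely_absent (basis_proj w) R.
Proof.
move=> hz hm hR trR.
have ptr1_w k : ptr1 ((basis_proj w k *t (1%:M : 'M[C]_n)) *m R) = d%:R^-1 *: ptr1 R.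
  by apply: ptr1_vproj_unbiased=> // j; apply: hm.
have prob_w k : prob (basis_proj w) R k = d%:R^-1.
  by rewrite /prob mxtrace_mul_ptr2 ptr1_w mxtraceZ mxtrace_ptr1 trR mulr1.
split=> // i j; rewrite /cond_state !prob_w !ptr1_w invrK !scalerA mulfV //.
by rewrite pnatr_eq0 -lt0n (leq_ltn_trans _ (ltn_ord i)).
Qed.

Lemma equiv_basis_mub d (z w0 w : 'I_d -> 'cV[C]_d) :
  onb z -> mub z w0 -> equiv_basis z w0 w -> mub z w.
Proof.
move=> hz hm [U [s [lam [U_unit U_diag lam1 hw]]]] j k.
have UU : U ^t* *m U = 1%:M by apply: mulmx1C; apply/unitarymxP.
have [c Uz] := U_diag j.
have cc : c^* * c = 1.
  have : (U *m z j) ^t* *m (U *m z j) = (z j) ^t* *m z j.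
    by rewrite trmxC_mul mulmxA -(mulmxA _ _ U) UU mulmx1.
  rewrite Uz trmxCZ -scalemxAl -scalemxAr scalerA hz eqxx => /matrixP/(_ 0 0).
  by rewrite !mxE eqxx mulr1n mulr1.
have zU : (z j) ^t* *m U = c *: (z j) ^t*.
  have Uz' : U ^t* *m z j = c^* *: z j.
    by rewrite -[z j in LHS]scale1r -cc -scalerA -Uz -scalemxAr mulmxA UU mul1mx.
  by rewrite -[U]trmxCK -trmxC_mul Uz' trmxCZ conjCK.
rewrite hw -(scalemxAr (lam k)) mulmxA zU -scalemxAl scalerA mxE normrM exprMn.
by rewrite normrM lam1 mul1r normCKC cc mul1r hm.
Qed.
End Bases.

Section Phases.
Variable C : numClosedFieldType.

Definition phases : seq C := [:: 1; -1; 'i; - 'i].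

Lemma phases_norm t : t \in phases -> `|t| = 1.
Proof. by rewrite !inE => /or4P[] /eqP->; rewrite ?normrN ?normr1 ?normCi. Qed.

Lemma phases_conjK t : t \in phases -> t^* * t = 1.
Proof. by move/phases_norm; rewrite -normCKC => ->; rewrite expr1n. Qed.

Lemma sum_phases : \sum_(t <- phases) t = 0.
Proof. by rewrite !big_cons big_nil; ring. Qed.

Lemma sum_phases_sqr : \sum_(t <- phases) t * t = 0.
Proof.
have ii : 'i * 'i = -1 :> C by rewrite -expr2 sqrCi.
by rewrite !big_cons big_nil !mulrNN ii; ring.
Qed.

Lemma sum_phases_conj : \sum_(t <- phases) t^* = 0.
Proof. by rewrite -rmorph_sum sum_phases rmorph0. Qed.

Lemma sum_phases_mono (a b : bool) :
  \sum_(t <- phases) t^* * t ^+ a * t^* ^+ b = (a && ~~ b)%:R * 4%:R.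
Proof.
case: a; case: b => /=.
- rewrite (eq_big_seq (fun t => t^*)) ?sum_phases_conj ?mul0r // => t /phases_conjK tt.
  by rewrite !expr1 tt mul1r.
- rewrite (eq_big_seq (fun=> 1)); first by rewrite !big_cons big_nil; ring.
  by move=> t /phases_conjK; rewrite expr1 expr0 mulr1.
- rewrite (eq_bigr (fun t => (t * t)^*)); last by move=> t _; rewrite expr0 expr1 mulr1 rmorphM.
  by rewrite -rmorph_sum sum_phases_sqr rmorph0 mul0r.
- rewrite (eq_bigr (fun t => t^*)) ?sum_phases_conj ?mul0r // => t _.
  by rewrite !expr0 !mulr1.
Qed.

Lemma sum_phases_conj_mono (a b : bool) :
  \sum_(t <- phases) t * t ^+ a * t^* ^+ b = (b && ~~ a)%:R * 4%:R.
Proof.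
transitivity ((\sum_(t <- phases) t^* * t ^+ b * t^* ^+ a)^*).
  rewrite rmorph_sum; apply: eq_bigr=> t _.
  rewrite !rmorphM !rmorphXn; change (t * t ^+ a * t^* ^+ b = t^*^* * t^* ^+ b * t^*^* ^+ a).
  by rewrite conjCK mulrAC.
by rewrite sum_phases_mono rmorphM !rmorph_nat.
Qed.

Lemma phases_coef d (j j' m m' : 'I_d) : j != j' ->
  \sum_(t <- phases) \sum_(s <- phases)
      t^* * s * (t ^+ (m == j) * s ^+ (m == j') * (t ^+ (m' == j) * s ^+ (m' == j'))^*)
  = ((m == j) && (m' == j'))%:R * 16%:R.
Proof.
move=> jj'.
transitivity ((\sum_(t <- phases) t^* * t ^+ (m == j) * t^* ^+ (m' == j)) *
              (\sum_(s <- phases) s * s ^+ (m == j') * s^* ^+ (m' == j'))).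
  rewrite mulr_suml; apply: eq_bigr=> t _; rewrite mulr_sumr; apply: eq_bigr=> s _.
  by rewrite rmorphM !rmorphXn; ring.
rewrite sum_phases_mono sum_phases_conj_mono mulrACA.
have [->|_] := eqVneq m j; have [->|_] := eqVneq m' j';
  by rewrite ?eqxx ?andbF ?andFb ?(eq_sym j') ?jj' /=; ring.
Qed.

Lemma sum_scale_form_exchange (V : lmodType C) I J (r : seq I) (r' : seq J) d
    (c : I -> J -> C) (f : I -> J -> 'I_d -> 'I_d -> C) (E : 'I_d -> 'I_d -> V) :
  \sum_(t <- r) \sum_(s <- r') c t s *: \sum_m \sum_m' f t s m m' *: E m m' =
  \sum_m \sum_m' (\sum_(t <- r) \sum_(s <- r') c t s * f t s m m') *: E m m'.
Proof.
under eq_bigr=> t _ do [under eq_bigr=> s _ do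
  [rewrite scaler_sumr; under eq_bigr=> m _ do
    [rewrite scaler_sumr; under eq_bigr=> m' _ do rewrite scalerA]]].
under eq_bigr=> t _ do rewrite exchange_big.
under eq_bigr=> t _ do under eq_bigr=> m _ do rewrite exchange_big.
rewrite exchange_big; under eq_bigr=> m _ do rewrite exchange_big.
by under eq_bigr=> m _ do under eq_bigr=> m' _ do
  [under eq_bigr=> t _ do rewrite -scaler_suml; rewrite -scaler_suml].
Qed.

(* A sesquilinear expression in a vector of phases [u] that does not depend on
   [u] has vanishing off-diagonal coefficients: average it against [t^* s]
   with [u] equal to [t] at [j], [s] at [j'] and [1] elsewhere. *)
Lemma phase_invariant_offdiag (V : lmodType C) d (E : 'I_d -> 'I_d -> V) (K : V) :
  (forall u : 'I_d -> C, (forall m, `|u m| = 1) ->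
     \sum_m \sum_m' (u m * (u m')^*) *: E m m' = K) ->
  forall j j', j != j' -> E j j' = 0.
Proof.
move=> hE j j' jj'.
pose u t s m : C := t ^+ (m == j) * s ^+ (m == j').
have u_norm t s : t \in phases -> s \in phases -> forall m, `|u t s m| = 1.
  by move=> /phases_norm t1 /phases_norm s1 m; rewrite normrM !normrX t1 s1 !expr1n mulr1.
have avgK : \sum_(t <- phases) \sum_(s <- phases) (t^* * s) *: K = 0.
  under eq_bigr do rewrite -scaler_suml -mulr_sumr sum_phases mulr0 scale0r.
  by rewrite big1.
have : \sum_(t <- phases) \sum_(s <- phases) (t^* * s) *: K = 16%:R *: E j j'.
  rewrite (eq_big_seq (fun t => \sum_(s <- phases) (t^* * s) *:
     \sum_m \sum_m' (u t s m * (u t s m')^*) *: E m m')); last first.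
    by move=> t ht; apply: eq_big_seq=> s hs; rewrite hE //; apply: u_norm.
  rewrite sum_scale_form_exchange.
  under eq_bigr=> m _ do under eq_bigr=> m' _ do rewrite phases_coef //.
  rewrite (bigD1 j) //= [X in _ + X]big1 ?addr0; last first.
    by move=> m /negbTE mj; rewrite big1 // => m' _; rewrite mj mul0r scale0r.
  rewrite (bigD1 j') //= [X in _ + X]big1 ?addr0; last first.
    by move=> m' /negbTE m'j'; rewrite m'j' andbF mul0r scale0r.
  by rewrite !eqxx mul1r.
by rewrite avgK => /esym/eqP; rewrite scaler_eq0 pnatr_eq0 => /eqP.
Qed.

End Phases.

Section Rephasing.
Variable C : numClosedFieldType.

Lemma completely_absent_ptr1 d n (w : 'I_d -> 'cV[C]_d) (R : 'M[C]_(d * n)) k :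
  completely_absent (basis_proj w) R -> \sum_(k < d) vproj (w k) = 1%:M ->
  ptr1 ((vproj (w k) *t (1%:M : 'M[C]_n)) *m R) = d%:R^-1 *: ptr1 R.
Proof.
move=> [p_unif cond_eq] w_sum.
have d_neq0 : d%:R != 0 :> C by rewrite pnatr_eq0 -lt0n (leq_ltn_trans _ (ltn_ord k)).
have ptr1_w k' : ptr1 ((vproj (w k') *t (1%:M : 'M[C]_n)) *m R) =
    d%:R^-1 *: cond_state (basis_proj w) R k.
  by rewrite -(cond_eq k') /cond_state p_unif invrK scalerA mulVf ?scale1r.
rewrite ptr1_w; congr (_ *: _).
rewrite -[R in RHS]mul1mx -tensmx11 -w_sum tens_suml mulmx_suml ptr1_sum.
under eq_bigr do rewrite ptr1_w.
by rewrite sumr_const card_ord -scaler_nat scalerA mulfV ?scale1r.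
Qed.

Definition onb_diag d (z : 'I_d -> 'cV[C]_d) (u : 'I_d -> C) : 'M[C]_d :=
  \sum_m u m *: vproj (z m).

Lemma onb_diagE d (z : 'I_d -> 'cV[C]_d) u j : onb z -> onb_diag z u *m z j = u j *: z j.
Proof.
move=> hz; rewrite /onb_diag mulmx_suml (bigD1 j) //= big1 ?addr0.
  by rewrite -scalemxAl vproj_onb // eqxx.
by move=> m /negbTE mj; rewrite -scalemxAl vproj_onb // mj scaler0.
Qed.

Lemma onb_diag_unitary d (z : 'I_d -> 'cV[C]_d) u : onb z -> (forall m, `|u m| = 1) ->
  onb_diag z u \is unitarymx.
Proof.
move=> hz u1; apply/unitarymxP.
have [hP PP sP] := onb_type_of_info hz.
rewrite /onb_diag trmxC_sum mulmx_suml -[RHS]sP; apply: eq_bigr=> m _.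
rewrite mulmx_sumr (bigD1 m) //= big1 ?addr0 => [|m' m'm].
  by rewrite trmxCZ -scalemxAl -scalemxAr scalerA -normCK u1 expr1n scale1r hP PP eqxx.
by rewrite trmxCZ -scalemxAl -scalemxAr hP PP eq_sym (negbTE m'm) !scaler0.
Qed.

Lemma unitary_sum_vproj d (U : 'M[C]_d) (w : 'I_d -> 'cV[C]_d) :
  U \is unitarymx -> onb w -> \sum_k vproj (U *m w k) = 1%:M.
Proof.
move=> U_unit hw; under eq_bigr do rewrite /vproj trmxC_mul mulmxA -(mulmxA U).
by rewrite -mulmx_suml -mulmx_sumr onb_sum_vproj // mulmx1; apply/unitarymxP.
Qed.

Lemma onb_diag_equiv_basis d (z w0 : 'I_d -> 'cV[C]_d) u :
  onb z -> (forall m, `|u m| = 1) -> equiv_basis z w0 (fun k => onb_diag z u *m w0 k).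
Proof.
move=> hz u1; exists (onb_diag z u), 1%g, (fun=> 1); split=> [|j|k|k].
- exact: onb_diag_unitary.
- by exists (u j); apply: onb_diagE.
- exact: normr1.
- by rewrite perm1 scale1r.
Qed.

Lemma onb_expand d (z : 'I_d -> 'cV[C]_d) (g : 'cV[C]_d) : onb z ->
  g = \sum_m ((z m) ^t* *m g) 0 0 *: z m.
Proof.
move=> hz; rewrite -{1}[g]mul1mx -(onb_sum_vproj hz) mulmx_suml.
by apply: eq_bigr=> m _; rewrite -mulmxA {1}[_ ^t* *m g]mx11_scalar mul_mx_scalar.
Qed.

Lemma ptr1_vproj_sum d n (c : 'I_d -> C) (z : 'I_d -> 'cV[C]_d) (R : 'M[C]_(d * n)) :
  ptr1 ((vproj (\sum_m c m *: z m) *t (1%:M : 'M[C]_n)) *m R) =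
  \sum_m \sum_m' (c m * (c m')^*) *: ptr1 (((z m *m (z m') ^t*) *t (1%:M : 'M[C]_n)) *m R).
Proof.
rewrite /vproj trmxC_sum mulmx_suml tens_suml mulmx_suml ptr1_sum; apply: eq_bigr=> m _.
rewrite mulmx_sumr tens_suml mulmx_suml ptr1_sum; apply: eq_bigr=> m' _.
by rewrite trmxCZ -scalemxAl -scalemxAr scalerA tensmxZl -scalemxAl ptr1Z.
Qed.

(* Rephasing [w0] by a unitary diagonal in [z] keeps it in its class, and
   absence of the rephased information makes the off-diagonal [z]-blocks of
   [R] the coefficients of a phase-invariant sesquilinear form. *)
Lemma completely_absent_pinched d n (z w0 : 'I_d -> 'cV[C]_d) (R : 'M[C]_(d * n)) :
  onb z -> onb w0 -> mub z w0 ->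
  (forall w, equiv_basis z w0 w -> completely_absent (basis_proj w) R) ->
  cond_i (basis_proj z) R.
Proof.
move=> hz hw0 hm absent.
have [d0|d_gt0] := posnP d; first by subst d; apply/matrixP=> -[].
pose k0 := Ordinal d_gt0; pose a m := ((z m) ^t* *m w0 k0) 0 0.
pose F m m' := ptr1 (((z m *m (z m') ^t*) *t (1%:M : 'M[C]_n)) *m R).
have rephased u : (forall m, `|u m| = 1) ->
    \sum_m \sum_m' (u m * (u m')^*) *: ((a m * (a m')^*) *: F m m') = d%:R^-1 *: ptr1 R.
  move=> u1; have w_sum := unitary_sum_vproj (onb_diag_unitary hz u1) hw0.
  have w_absent := absent _ (onb_diag_equiv_basis w0 hz u1).
  rewrite -(completely_absent_ptr1 k0 w_absent w_sum) (onb_expand (w0 k0) hz).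
  rewrite mulmx_sumr (eq_bigr (fun m => (a m * u m) *: z m)); last first.
    by move=> m _; rewrite -scalemxAr onb_diagE // scalerA.
  rewrite ptr1_vproj_sum; apply: eq_bigr=> m _; apply: eq_bigr=> m' _.
  by rewrite scalerA rmorphM; congr (_ *: _); ring.
have a_neq0 m : a m != 0.
  apply: contra_eq_neq (hm m k0) => /= am.
  by rewrite -/(a m) am normr0 expr0n /= eq_sym invr_eq0 pnatr_eq0 -lt0n d_gt0.
apply/(pinch_fixed_blockdiag R (type_of_info_tens1 n (onb_type_of_info hz))).
move=> i j ij; rewrite /basis_proj /vproj vproj_tens1_sandwich.
rewrite eq_sym in ij; have /eqP := phase_invariant_offdiag rephased ij.
rewrite scaler_eq0 mulf_eq0 conjC_eq0 !(negbTE (a_neq0 _)) /= => /eqP Fji.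
by rewrite -/(F j i) Fji tensmx0.
Qed.

End Rephasing.

Lemma pure_info_tfae (C : numClosedFieldType) dA dB dC (rho : 'M[C]_(dA * dB * dC))
    N (Z : 'I_N -> 'M[C]_dA) :
  pure_state rho -> type_of_info Z ->
  [<-> cond_i Z (rhoAB rho); perfectly_present Z (rhoAC rho); cond_iii Z (rhoAB rho)].
Proof.
move=> [psi [psi_unit ->]] Z_info.
have cond_iE : cond_i Z (rhoAB (psi *m psi ^t*)) <->
    blockdiag (fun j => Z j *t (1%:M : 'M[C]_dB)) (rhoAB (psi *m psi ^t*)).
  exact: pinch_fixed_blockdiag (type_of_info_tens1 dB Z_info).
tfae=> [/cond_iE | /(perfectly_present_blockdiag Z_info) | /(separable_blockdiag Z_info)].
- exact: blockdiag_perfectly_present.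
- exact: blockdiag_separable.
- by move=> bd; apply/cond_iE.
Qed.

Theorem corollary1 (C : numClosedFieldType) (dA dB dC : nat)
  (rho : 'M[C]_(dA * dB * dC)) :
  pure_state rho ->
  (forall (N : nat) (Z : 'I_N -> 'M[C]_dA), type_of_info Z ->
     [<-> cond_i Z (rhoAB rho);
          perfectly_present Z (rhoAC rho);
          cond_iii Z (rhoAB rho)])
  /\
  (forall (z w0 : 'I_dA -> 'cV[C]_dA), onb z -> onb w0 -> mub z w0 ->
     [<-> cond_i (basis_proj z) (rhoAB rho);
          perfectly_present (basis_proj z) (rhoAC rho);
          cond_iii (basis_proj z) (rhoAB rho);
          forall w : 'I_dA -> 'cV[C]_dA, equiv_basis z w0 w ->
            completely_absent (basis_proj w) (rhoAB rho)]).
Proof.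
move=> pure; split=> [N Z|z w0 hz hw0 hm]; first exact: pure_info_tfae.
have info := pure_info_tfae pure (onb_type_of_info hz).
have trR : \tr (rhoAB rho) = 1.
  by case: pure => psi [psi_unit ->]; rewrite /rhoAB mxtrace_ptr2 pure_mxtrace.
tfae.
- exact: (all_iffLR info 0 1).
- exact: (all_iffLR info 1 2).
- move=> /(all_iffLR info 2 0) pinched w /(equiv_basis_mub hz hm) hw.
  exact: mub_completely_absent.
- exact: completely_absent_pinched.
Qed.
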